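(* Let $M>0$, $\mu>0$, $n\in\{0,1,2,\dots\}$, and let $m,k\in\{0,1,2,\dots\}$ with $$m\geq 2k+1+\sqrt{6k^2+6k+1},$$ and put $l=m+k$. Let $a\in[0,M)$ satisfy $$1>\frac{a}{M}>\frac{2\sqrt6}{5}\,\frac{\sqrt{1+\frac{1}{m}\left[2k+1+\frac{k(k+1)}{m}\right]}}{1+\frac{2/5}{m}\left[2k+1+\frac{k(k+1)}{m}\right]}.$$ Define $\alpha_1=\frac{ma}{\mu M^2}$, $\alpha_2=\frac{2n+1}{\mu M}\sqrt{1-\frac{a^2}{M^2}}$, $\alpha=\alpha_1-i\alpha_2$, $\epsilon=2\sqrt{1-\frac{a^2}{M^2}}$, $\beta=6-\frac{l(l+1)}{\mu^2M^2}$, and, when $\beta\geq0$, $$q(z)=z^4+\frac{4z}{\beta+\epsilon}\left[(2+\epsilon)(z^2+1)+\alpha(z^2-1)\right]+2\,\frac{16-\beta+3\epsilon}{\beta+\epsilon}\,z^2+1,\quad z\in\mathbb{C}.$$ Then the open interval $$I=\left(\sqrt{\tfrac16\,l(l+1)}\,,\ \frac{\frac{ma}{M}}{2\left(1+\sqrt{1-\frac{a^2}{M^2}}\right)}\right)$$ is non-empty, and for every $\mu$ with $\mu M\in I$, the open first quadrant $\{z\in\mathbb{C}:\mathrm{Re}(z)>0,\ \mathrm{Im}(z)>0\}$ contains precisely $1$ root of $q$. (Note $\frac{2\sqrt6}{5}\approx0.979796$.) *)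

From HB Require Import structures.
From mathcomp Require Import all_boot all_order all_algebra.
From mathcomp Require Import complex.
Set Implicit Arguments. Unset Strict Implicit. Unset Printing Implicit Defensive.
Import Order.TTheory GRing.Theory Num.Theory.
Local Open Scope ring_scope.

Section Defs.
Variable R : rcfType.

Definition Kmk (m k : nat) : R :=
  (m%:R)^-1 * ((2 * k + 1)%:R + (k * (k + 1))%:R / m%:R).

Definition a_bound (m k : nat) : R :=
  (2 * Num.sqrt 6 / 5) * Num.sqrt (1 + Kmk m k) / (1 + (2 / 5) * Kmk m k).

Definition alpha1 (M mu a : R) (m : nat) : R := m%:R * a / (mu * M ^+ 2).
Definition alpha2 (M mu a : R) (n : nat) : R :=
  (2 * n + 1)%:R / (mu * M) * Num.sqrt (1 - a ^+ 2 / M ^+ 2).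
Definition alphaC (M mu a : R) (m n : nat) : R[i] :=
  (alpha1 M mu a m +i* (- alpha2 M mu a n))%C.
Definition epsR (M a : R) : R := 2 * Num.sqrt (1 - a ^+ 2 / M ^+ 2).
Definition betaR (M mu : R) (l : nat) : R := 6 - (l * (l + 1))%:R / (mu ^+ 2 * M ^+ 2).

Definition qKerr (M mu a : R) (m k n : nat) : {poly R[i]} :=
  let l := (m + k)%N in
  let e := epsR M a in
  let b := betaR M mu l in
  let al := alphaC M mu a m n in
  'X^4
  + ((4 / (b + e))%:C)%C%:P * 'X
      * (((2 + e)%:C)%C%:P * ('X^2 + 1) + al%:P * ('X^2 - 1))
  + ((2 * (16 - b + 3 * e) / (b + e))%:C)%C%:P * 'X^2
  + 1.

Definition I_low (m k : nat) : R := Num.sqrt ((6%:R)^-1 * ((m + k) * (m + k + 1))%:R).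
Definition I_high (M a : R) (m : nat) : R :=
  (m%:R * a / M) / (2 * (1 + Num.sqrt (1 - a ^+ 2 / M ^+ 2))).

End Defs.

(* Let r_1, ..., r_4 be the roots of q in C = R[i].  For a monic polynomial h of even degree
   that is positive wherever it is real on the real axis, a Cauchy-index computation along the
   real line (the argument principle, proved by induction on the roots) shows that h has no real
   root and that sum_j sgz (Im r_j) = 0.  For q the imaginary part vanishes on the real axis only
   at 0 and +-1, and on the imaginary axis only at 0, and q is positive there; applying the count
   to q, to q rotated by -i, and to q(z) q(-z) viewed as a polynomial in z^2 (whose roots are the
   r_j^2) gives sum sgz Im r_j = sum sgz Re r_j = sum sgz Re r_j * sgz Im r_j = 0.  Hence
   sum_j (1 + sgz Re r_j)(1 + sgz Im r_j) = 4, i.e. exactly one root lies in the open first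
   quadrant.  The hypotheses on m, a/M and mu M are exactly the sign conditions on the
   coefficients of q needed here, and the lower bound on a/M is what makes I non-empty. *)

From HB Require Import structures.
From mathcomp Require Import all_boot all_order all_algebra.
From mathcomp Require Import complex polyorder polyrcf qe_rcf_th.
From mathcomp Require Import ring lra zify.
Set Implicit Arguments. Unset Strict Implicit. Unset Printing Implicit Defensive.
Import Order.TTheory GRing.Theory Num.Theory.
Local Open Scope ring_scope.

Section CauchyIndex.
Variable R : rcfType.
Implicit Types (p q r : {poly R}) (x : R).

Lemma sgzV x : sgz x^-1 = sgz x.
Proof. by rewrite !sgz_def invr_lt0 invr_eq0. Qed.

Lemma jump_modp q p x : jump q p x = jump (q %% p) p x.
Proof. by rewrite jump_mod modpE jump_mulCp -exprVn sgzX sgzV. Qed.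

Lemma jump_addmulp q r p x : jump (q + r * p) p x = jump q p x.
Proof. by rewrite jump_modp modpD modp_mull addr0 -jump_modp. Qed.

Lemma jump_pmull r q p x : (forall y, 0 < r.[y]) -> jump (r * q) p x = jump q p x.
Proof.
move=> r_gt0; have r_neq0 : r != 0.
  by apply/eqP => r0; have := r_gt0 0; rewrite r0 horner0 ltxx.
have [->|q_neq0] := eqVneq q 0; first by rewrite mulr0.
have r_x : ~~ root r x by rewrite /root gt_eqF.
have mu_r0 : \mu_x r = 0%N by apply/eqP; rewrite -leqn0 leqNgt mu_gt0.
rewrite /jump mulf_neq0 // mu_mul ?mulf_neq0 // mu_r0 add0n -mulrA sgp_right_mul.
by rewrite sgp_rightNroot // gtr0_sg // mul1r q_neq0.
Qed.

(* (X - (a + ib)) (p + iq) has real part (X - a) p + b q and imaginary part (X - a) q - b p. *)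
Lemma cindexR_mulXsubC p q a b : b != 0 ->
  cindexR (('X - a%:P) * p + b *: q) (('X - a%:P) * q - b *: p)
  = cindexR p q + sgz b * crossR ((('X - a%:P) * q - b *: p) * q).
Proof.
move=> b_neq0; set L := 'X - a%:P; set P := L * q - b *: p.
have sgz_bb : sgz b * sgz b = 1 by rewrite mulz_sg b_neq0.
have LLb_gt0 y : 0 < (L * L + (b ^+ 2)%:P).[y].
  rewrite hornerD hornerM hornerC; have := sqr_ge0 L.[y].
  have : 0 < b ^+ 2 by rewrite exprn_even_gt0.
  rewrite expr2; nra.
have jump_num y : jump (L * p + b *: q) P y = sgz b * jump q P y.
  have e : b *: (L * p + b *: q) = (L * L + (b ^+ 2)%:P) * q + (- L) * P.
    rewrite /P -!mul_polyC rmorphXn /=; ring.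
  have := jump_mulCp b (L * p + b *: q) P y.
  by rewrite e jump_addmulp jump_pmull // => ->; rewrite mulrA sgz_bb mul1r.
have jump_next y : jump (next_mod P q) q y = sgz b * jump p q y.
  rewrite /next_mod jump_mulCp sgzN sgzX mulNr -jump_mod /P addrC -scaleNr.
  by rewrite jump_addmulp jump_mulCp sgzN mulNr opprK.
rewrite /cindexR (eq_bigr _ (fun y _ => jump_num y)) -big_distrr /=.
rewrite -/(cindexR q P) cindexR_rec /cindexR (eq_bigr _ (fun y _ => jump_next y)).
by rewrite -big_distrr /= mulrDr mulrA sgz_bb mul1r addrC.
Qed.

End CauchyIndex.

Definition neg_ind (x : int) : int := Posz (nat_of_bool (x < 0)).

(* The integer identity behind endpoint_term_mulXsubC: sb = sgz b, e = (-1)^n, and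
   (vp, vm), (pp, pm) are the signs at +oo and -oo of the old and new imaginary parts. *)
Definition endpoint_step_eq (sb e vp vm pp pm : int) :=
  sb + (neg_ind vp - neg_ind (e * vm)) =
  sb * ((pp * vp) * neg_ind ((pm * vm) * (pp * vp))) + (neg_ind pp - neg_ind (- e * pm)).

(* The cases of endpoint_term_mulXsubC: deg q < n - 1, deg q = n - 1 with lead_coef q = b
   (the leading terms cancel), and deg q = n - 1 otherwise. *)
Section EndpointStepCases.
Variables sb e : int.
Hypotheses (sb_pm1 : sb \in [:: 1; -1]) (e_pm1 : e \in [:: 1; -1]).

Lemma endpoint_step_eq_lowdeg vp vm :
  (vp == 0) && (vm == 0) || (vp \in [:: 1; -1]) && (vm \in [:: 1; -1]) ->
  endpoint_step_eq sb e vp vm (- sb) (e * - sb).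
Proof.
move: sb_pm1 e_pm1; rewrite !inE => /orP[]/eqP-> /orP[]/eqP->.
all: by case/orP=> [/andP[/eqP-> /eqP->]|/andP[/orP[]/eqP-> /orP[]/eqP->]].
Qed.

Lemma endpoint_step_eq_cancel pp pm :
  (pp == 0) && (pm == 0) || (pp \in [:: 1; -1]) && (pm \in [:: 1; -1]) ->
  endpoint_step_eq sb e sb (- e * sb) pp pm.
Proof.
move: sb_pm1 e_pm1; rewrite !inE => /orP[]/eqP-> /orP[]/eqP->.
all: by case/orP=> [/andP[/eqP-> /eqP->]|/andP[/orP[]/eqP-> /orP[]/eqP->]].
Qed.

Lemma endpoint_step_eq_topdeg vp pp :
  vp \in [:: 1; -1] -> pp \in [:: 1; -1] -> (vp == sb) || (pp == vp) ->
  endpoint_step_eq sb e vp (- e * vp) pp (e * pp).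
Proof.
by move: sb_pm1 e_pm1; rewrite !inE => /orP[]/eqP-> /orP[]/eqP-> /orP[]/eqP-> /orP[]/eqP->.
Qed.

End EndpointStepCases.

Section EndpointTerm.
Variable R : rcfType.
Implicit Types (p q : {poly R}) (x : R).

Definition sgz_pinfty p : int := sgz (lead_coef p).
Definition sgz_minfty p : int := sgz ((-1) ^+ (size p).-1 * lead_coef p).

(* For p = Im h with h monic of degree n, Re h has sign 1 at +oo and (-1)^n at -oo:
   this term compares the signs of Im h / Re h at both ends of the real line. *)
Definition endpoint_term p (n : nat) : int :=
  neg_ind (sgz_pinfty p) - neg_ind ((-1) ^+ n * sgz_minfty p).

Lemma crossR_sgz_infty p : crossR p = sgz_pinfty p * neg_ind (sgz_minfty p * sgz_pinfty p).
Proof.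
rewrite /crossR /variation /sgp_minfty /sgp_pinfty /sgz_pinfty /sgz_minfty sgz_sgr.
by rewrite !sgrEz -rmorphM /= ltrz0.
Qed.

Lemma sgz_pinftyM p q : sgz_pinfty (p * q) = sgz_pinfty p * sgz_pinfty q.
Proof. by rewrite /sgz_pinfty lead_coefM sgzM. Qed.

Lemma sgz_minftyM p q : sgz_minfty (p * q) = sgz_minfty p * sgz_minfty q.
Proof.
rewrite /sgz_minfty.
have [->|p_neq0] := eqVneq p 0; first by rewrite mul0r lead_coef0 !mulr0 sgz0 mul0r.
have [->|q_neq0] := eqVneq q 0; first by rewrite mulr0 lead_coef0 !mulr0 sgz0 mulr0.
rewrite size_mul // lead_coefM -sgzM [size p]polySpred // [size q]polySpred //.
by rewrite addSn /= addnS /= exprD mulrACA.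
Qed.

Lemma sgz_pm1 x : x != 0 -> sgz x \in [:: 1; -1].
Proof. by case: sgzP. Qed.

Lemma sgz_infty_pm1 p : p != 0 ->
  sgz_pinfty p \in [:: 1; -1] /\ sgz_minfty p \in [:: 1; -1].
Proof.
rewrite -lead_coef_eq0 => lp_neq0.
by rewrite /sgz_pinfty /sgz_minfty !sgz_pm1 // mulf_neq0 ?signr_eq0.
Qed.

Lemma sgz_infty_signs p :
  (sgz_pinfty p == 0) && (sgz_minfty p == 0) ||
  (sgz_pinfty p \in [:: 1; -1]) && (sgz_minfty p \in [:: 1; -1]).
Proof.
have [->|/sgz_infty_pm1[-> ->]] := eqVneq p 0; last by rewrite orbT.
by rewrite /sgz_pinfty /sgz_minfty lead_coef0 mulr0 sgz0 eqxx.
Qed.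

Lemma sgz_minfty_size p n : size p = n.+1 -> sgz_minfty p = (-1) ^+ n * sgz_pinfty p.
Proof. by move=> sp; rewrite /sgz_minfty /sgz_pinfty sp sgzM sgzX sgzN1. Qed.

Section Step.
Variables (p q : {poly R}) (a b : R) (n : nat).
Hypotheses (b_neq0 : b != 0) (p_monic : lead_coef p = 1) (size_p : size p = n.+1).
Hypothesis size_q : (size q <= n)%N.
Local Notation L := ('X - a%:P).
Local Notation P := (L * q - b *: p).

Lemma sgz_infty_next_lowdeg : (size (L * q)%R < n.+1)%N ->
  sgz_pinfty P = - sgz b /\ sgz_minfty P = (-1) ^+ n * - sgz b.
Proof.
have sbp : size (b *: p) = n.+1 by rewrite size_scale.
move=> small; rewrite -sbp -(size_polyN (b *: p)) in small.
have lP : lead_coef P = - b by rewrite addrC lead_coefDl // lead_coefN lead_coefZ p_monic mulr1.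
have sP : size P = n.+1 by rewrite addrC size_polyDl // size_polyN.
by rewrite (sgz_minfty_size sP) /sgz_pinfty lP sgzN.
Qed.

Lemma endpoint_term_mulXsubC :
  sgz b + endpoint_term q n = sgz b * crossR (P * q) + endpoint_term P n.+1.
Proof.
rewrite crossR_sgz_infty sgz_pinftyM sgz_minftyM /endpoint_term exprS mulN1r.
set e : int := (-1) ^+ n.
suff : endpoint_step_eq (sgz b) e (sgz_pinfty q) (sgz_minfty q) (sgz_pinfty P) (sgz_minfty P).
  by [].
have sb := sgz_pm1 b_neq0.
have se : e \in [:: 1; -1] by rewrite /e -signr_odd; case: odd.
have sLq : q != 0 -> size (L * q) = (size q).+1.
  by move=> q_neq0; rewrite size_mul ?polyXsubC_eq0 // size_XsubC.
have [small|] := ltnP (size (L * q)) n.+1.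
  have [-> ->] := sgz_infty_next_lowdeg small.
  exact: (endpoint_step_eq_lowdeg sb se (sgz_infty_signs q)).
have [->|q_neq0] := eqVneq q 0; first by rewrite mulr0 size_poly0.
rewrite sLq // ltnS => size_qn; have {size_qn} sq : size q = n by apply/eqP; rewrite eqn_leq size_q.
have n0 : (0 < n)%N by rewrite -sq size_poly_gt0.
have -> : sgz_minfty q = - e * sgz_pinfty q.
  by rewrite (@sgz_minfty_size _ n.-1) ?prednK // /e -{2}(prednK n0) exprS mulN1r opprK.
have PnE : P`_n = lead_coef q - b.
  have lLq : lead_coef (L * q) = lead_coef q by rewrite lead_coefM lead_coefXsubC mul1r.
  rewrite coefB coefZ -lLq lead_coefE sLq // sq /=.
  by rewrite (_ : p`_n = 1) ?mulr1 // -p_monic lead_coefE size_p.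
have [lqb|lqb] := eqVneq (lead_coef q) b.
  by rewrite /sgz_pinfty lqb; apply: (endpoint_step_eq_cancel sb se (sgz_infty_signs P)).
have sP : size P = n.+1.
  apply/eqP; rewrite eqn_leq (leq_trans (size_polyD _ _)) ?geq_max ?size_polyN ?size_scale
    ?size_p ?sLq ?sq ?leqnn ?andbT //=.
  by rewrite ltnNge; apply: contra lqb => /leq_sizeP/(_ n (leqnn n))/eqP; rewrite PnE subr_eq0.
have lP : lead_coef P = lead_coef q - b by rewrite lead_coefE sP PnE.
have lq_neq0 : lead_coef q != 0 by rewrite lead_coef_eq0.
rewrite (sgz_minfty_size sP); apply: (endpoint_step_eq_topdeg sb se); rewrite /sgz_pinfty ?lP.
- exact: sgz_pm1.
- by apply: sgz_pm1; rewrite subr_eq0.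
case: (sgzP (lead_coef q)) lq_neq0 => // hq _; case: (sgzP b) b_neq0 => // hb _; rewrite ?eqxx //=.
  by rewrite gtr0_sgz // subr_gt0 (lt_trans hb hq).
by rewrite ltr0_sgz // subr_lt0 (lt_trans hq hb).
Qed.

End Step.
End EndpointTerm.

Section ComplexParts.
Variable R : rcfType.
Local Notation C := R[i].
Local Open Scope complex_scope.
Implicit Types (p : {poly C}) (A B : {poly R}).

Definition cpoly A : {poly C} := map_poly (real_complex R) A.
Definition Repoly p : {poly R} := \poly_(k < size p) complex.Re p`_k.
Definition Impoly p : {poly R} := \poly_(k < size p) complex.Im p`_k.

Lemma coef_Repoly p k : (Repoly p)`_k = complex.Re p`_k.
Proof. by rewrite coef_poly; case: ltnP => // h; rewrite nth_default. Qed.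

Lemma coef_Impoly p k : (Impoly p)`_k = complex.Im p`_k.
Proof. by rewrite coef_poly; case: ltnP => // h; rewrite nth_default. Qed.

Lemma coef_cpoly_ReIm A B k : (cpoly A + 'i%:P * cpoly B)`_k = A`_k +i* B`_k.
Proof.
rewrite coefD coefCM !coef_map /=.
by apply/eqP; rewrite eq_complex /= !(mul0r, mul1r, subr0, addr0, add0r, mulr0, subrr) !eqxx.
Qed.

Lemma Repoly_cpoly A B : Repoly (cpoly A + 'i%:P * cpoly B) = A.
Proof. by apply/polyP => k; rewrite coef_Repoly coef_cpoly_ReIm. Qed.

Lemma Impoly_cpoly A B : Impoly (cpoly A + 'i%:P * cpoly B) = B.
Proof. by apply/polyP => k; rewrite coef_Impoly coef_cpoly_ReIm. Qed.

Lemma cpoly_ReIm p : p = cpoly (Repoly p) + 'i%:P * cpoly (Impoly p).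
Proof. by apply/polyP => k; rewrite coef_cpoly_ReIm coef_Repoly coef_Impoly; case: (p`_k). Qed.

Lemma horner_Repoly p (x : R) : (Repoly p).[x] = complex.Re p.[x%:C].
Proof.
rewrite {2}(cpoly_ReIm p) hornerD hornerM hornerC !horner_map /=.
by rewrite !(mul0r, mul1r, subr0, addr0, add0r, mulr0, subrr).
Qed.

Lemma horner_Impoly p (x : R) : (Impoly p).[x] = complex.Im p.[x%:C].
Proof.
rewrite {2}(cpoly_ReIm p) hornerD hornerM hornerC !horner_map /=.
by rewrite !(mul0r, mul1r, subr0, addr0, add0r, mulr0, subrr).
Qed.

Lemma mulXsubC_ReIm p r :
  ('X - r%:P) * p =
  cpoly (('X - (complex.Re r)%:P) * Repoly p + (complex.Im r)%:P * Impoly p)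
  + 'i%:P * cpoly (('X - (complex.Re r)%:P) * Impoly p - (complex.Im r)%:P * Repoly p).
Proof.
have er : r%:P = cpoly (complex.Re r)%:P + 'i%:P * cpoly (complex.Im r)%:P.
  by apply/polyP => k; rewrite coef_cpoly_ReIm !coefC; case: (k == 0)%N; case: r.
have ii : 'i%:P * 'i%:P = -1 :> {poly C} by rewrite -polyCM -expr2 sqr_i polyCN.
rewrite {1}(cpoly_ReIm p) er -(map_polyX (real_complex R)) /cpoly.
rewrite !rmorphD !rmorphM !rmorphB !rmorphN !rmorphM /=.
set X' := map_poly _ 'X.
set a := map_poly _ (complex.Re r)%:P; set b := map_poly _ (complex.Im r)%:P.
set U := map_poly _ (Repoly p); set V := map_poly _ (Impoly p).
transitivity ((X' - a) * U + b * V + 'i%:P * ((X' - a) * V - b * U)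
  - ('i%:P * 'i%:P + 1) * (b * V)); first ring.
by rewrite ii addNr mul0r subr0.
Qed.

End ComplexParts.

Section ArgumentPrinciple.
Variable R : rcfType.
Local Notation C := R[i].
Local Open Scope complex_scope.
Implicit Types (s : seq C) (f : R -> C).

Definition pos_where_real f := forall t, complex.Im (f t) = 0 -> 0 < complex.Re (f t).

Theorem sum_sgz_Im_roots s : all (fun r => complex.Im r != 0) s ->
  let h := \prod_(r <- s) ('X - r%:P) in
  \sum_(r <- s) sgz (complex.Im r)
  = cindexR (Repoly h) (Impoly h) + endpoint_term (Impoly h) (size s).
Proof.
elim: s => [|r s IH] /=.
  rewrite !big_nil (_ : Impoly 1 = 0) ?cindexRpC /endpoint_term /sgz_pinfty /sgz_minfty.
    by rewrite lead_coef0 mulr0 sgz0.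
  by apply/polyP => k; rewrite coef_Impoly coefC coef0; case: (k == 0)%N.
case/andP => r_nreal /IH {}IH.
set h := \prod_(r <- s) ('X - r%:P) in IH *.
have h_monic : h \is monic by apply: monic_prod_XsubC.
have size_h : size h = (size s).+1 by rewrite size_prod_XsubC.
have h_top : h`_(size s) = 1 by move: h_monic; rewrite monicE lead_coefE size_h => /eqP.
have size_Re : size (Repoly h) = (size s).+1.
  apply/eqP; rewrite eqn_leq -{1}size_h size_poly /= ltnNge.
  apply/negP => /leq_sizeP/(_ _ (leqnn _)).
  by rewrite coef_Repoly h_top => /eqP; rewrite oner_eq0.
have Re_monic : lead_coef (Repoly h) = 1 by rewrite lead_coefE size_Re coef_Repoly h_top.
have size_Im : (size (Impoly h) <= size s)%N.
  apply/leq_sizeP => j; rewrite leq_eqVlt => /orP[/eqP<-|hj].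
    by rewrite coef_Impoly h_top.
  by rewrite coef_Impoly nth_default // size_h.
rewrite !big_cons IH mulXsubC_ReIm Repoly_cpoly Impoly_cpoly !mul_polyC.
rewrite cindexR_mulXsubC // -addrA [sgz _ + _]addrC -addrA; congr (_ + _); rewrite addrC.
exact: endpoint_term_mulXsubC.
Qed.

Lemma cindexR_pos_at_roots (q p : {poly R}) : (forall x, root p x -> 0 < q.[x]) ->
  cindexR q p = crossR p.
Proof.
move=> q_gt0; suff -> : cindexR q p = cindexR 1 p.
  by rewrite cindexR_rec mulr1 -[1]/(1%:P) cindexRpC addr0.
rewrite /cindexR; apply: eq_big_seq => x x_root.
have {x_root}/q_gt0 qx_gt0 : root p x.
  have [p0|p_neq0] := eqVneq p 0; first by rewrite p0 rootsR0 in x_root.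
  by move: x_root; rewrite -(roots_on_rootsR p_neq0 x) => /andP[].
have q_neq0 : q != 0 by apply: contraTneq qx_gt0 => ->; rewrite horner0 ltxx.
have qx : ~~ root q x by rewrite /root gt_eqF.
rewrite /jump q_neq0 oner_neq0 mu_polyC (_ : \mu_x q = 0%N); last first.
  by apply/eqP; rewrite -leqn0 leqNgt mu_gt0.
by rewrite mul1r sgp_right_mul sgp_rightNroot ?gtr0_sg ?mul1r.
Qed.

Lemma crossR_endpoint_term_even (p : {poly R}) n : ~~ odd n -> crossR p + endpoint_term p n = 0.
Proof.
move=> n_even; rewrite crossR_sgz_infty /endpoint_term -signr_odd (negPf n_even) expr0 mul1r.
have [->|/sgz_infty_pm1[]] := eqVneq p 0.
  by rewrite /sgz_pinfty /sgz_minfty lead_coef0 mulr0 sgz0.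
by rewrite !inE => /orP[]/eqP-> /orP[]/eqP->.
Qed.

Theorem balanced_half_planes s : ~~ odd (size s) ->
  let h := \prod_(r <- s) ('X - r%:P) in
  pos_where_real (fun x => h.[x%:C]) ->
  all (fun r => complex.Im r != 0) s /\ \sum_(r <- s) sgz (complex.Im r) = 0.
Proof.
move=> s_even h h_pos.
have s_nreal : all (fun r => complex.Im r != 0) s.
  apply/allP => r rs; apply/negP => /eqP Im_r0.
  have hr : h.[(complex.Re r)%:C] = 0.
    have -> : (complex.Re r)%:C = r by move: Im_r0; case: (r) => a b /= ->.
    by apply/eqP; rewrite -/(root h r) root_prod_XsubC.
  by have := h_pos (complex.Re r); rewrite hr ltxx => /(_ erefl).
split => //; rewrite sum_sgz_Im_roots // -/h cindexR_pos_at_roots ?crossR_endpoint_term_even //.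
by move=> x; rewrite /root horner_Impoly horner_Repoly => /eqP; apply: h_pos.
Qed.

End ArgumentPrinciple.

Section Quadrants.
Variable R : rcfType.
Local Notation C := R[i].
Local Open Scope complex_scope.
Implicit Types (s : seq C) (f : R -> C) (r : C).

Definition odd_Im f := forall t, complex.Im (f (- t)) = - complex.Im (f t).
Definition first_quadrant : pred C := fun z => (0 < complex.Re z) && (0 < complex.Im z).

Lemma horner_prod_XsubC s z : (\prod_(r <- s) ('X - r%:P)).[z] = \prod_(r <- s) (z - r).
Proof. by rewrite horner_prod; apply: eq_bigr => r _; rewrite hornerXsubC. Qed.

Lemma expi_dvd4 n : (4 %| n)%N -> 'i ^+ n = 1 :> C.
Proof.
move=> /dvdnP[k ->]; rewrite mulnC exprM (_ : 'i ^+ 4 = 1) ?expr1n //.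
by rewrite (exprM _ 2 2) sqr_i sqrrN expr1n.
Qed.

Lemma Im_muliN r : complex.Im (- 'i * r) = - complex.Re r.
Proof. by case: r => a b /=; ring. Qed.

Lemma sgz_Im_sqr r : sgz (complex.Im (r * r)) = sgz (complex.Re r) * sgz (complex.Im r).
Proof.
case: r => a b /=; rewrite (_ : a * b + b * a = 2 * (a * b)); last by ring.
by rewrite !sgzM gtr0_sgz // mul1r.
Qed.

Lemma Re_mul_gt0 (a b : C) : complex.Im b = - complex.Im a ->
  (complex.Im a = 0 -> 0 < complex.Re a) -> (complex.Im b = 0 -> 0 < complex.Re b) ->
  complex.Im (a * b) = 0 -> 0 < complex.Re (a * b).
Proof.
case: a => a1 a2; case: b => b1 b2 /= -> ha hb.
have [a2_0|a2_neq0] := eqVneq a2 0.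
  by move=> _; rewrite a2_0 oppr0 !mulr0 subr0 mulr_gt0 ?ha ?hb // a2_0 oppr0.
move=> Im_ab0; have -> : b1 = a1.
  have /eqP : a2 * (b1 - a1) = 0 by rewrite -Im_ab0; ring.
  by rewrite mulf_eq0 (negPf a2_neq0) subr_eq0 => /eqP.
have : 0 < a2 * a2 by rewrite -expr2 exprn_even_gt0.
have := sqr_ge0 a1; rewrite expr2; nra.
Qed.

Lemma prod_subr_rot s (y : R) :
  \prod_(r <- s) ((0 +i* y) - r) = 'i ^+ size s * \prod_(r <- s) (y%:C - - 'i * r).
Proof.
elim: s => [|r s IH]; first by rewrite !big_nil mulr1.
rewrite !big_cons IH exprS mulrACA; congr (_ * _).
by case: r => a b; apply/eqP; rewrite eq_complex /=; apply/andP; split; apply/eqP; ring.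
Qed.

(* Rotating by -i exchanges the imaginary axis and the real axis. *)
Lemma balanced_right_left s : (4 %| size s)%N ->
  let h := \prod_(r <- s) ('X - r%:P) in
  pos_where_real (fun y => h.[0 +i* y]) ->
  all (fun r => complex.Re r != 0) s /\ \sum_(r <- s) sgz (complex.Re r) = 0.
Proof.
move=> s4 h h_pos.
have rotE (y : R) : (\prod_(r <- map (fun r => - 'i * r) s) ('X - r%:P)).[y%:C] = h.[0 +i* y].
  by rewrite !horner_prod_XsubC big_map prod_subr_rot expi_dvd4 ?mul1r.
have [] := @balanced_half_planes _ (map (fun r => - 'i * r) s).
- by rewrite size_map -dvdn2 (dvdn_trans _ s4).
- by move=> x; rewrite rotE; apply: h_pos.
rewrite all_map big_map; under eq_all do rewrite /= Im_muliN oppr_eq0.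
by under eq_bigr do rewrite Im_muliN sgzN; rewrite sumrN => -> /eqP; rewrite oppr_eq0 => /eqP.
Qed.

Lemma prod_subr_sqr s z :
  \prod_(r <- s) (z * z - r * r)
  = (-1) ^+ size s * \prod_(r <- s) (z - r) * \prod_(r <- s) (- z - r).
Proof.
elim: s => [|r s IH]; first by rewrite !big_nil !mulr1.
rewrite !big_cons IH /= exprS; ring.
Qed.

(* The roots of h(z) h(-z), as a polynomial in z^2, are the squares of the roots of h:
   Im (r^2) has the sign of Re r * Im r. *)
Lemma balanced_quadrants s : (4 %| size s)%N ->
  let h := \prod_(r <- s) ('X - r%:P) in
  pos_where_real (fun x => h.[x%:C]) -> pos_where_real (fun y => h.[0 +i* y]) ->
  odd_Im (fun x => h.[x%:C]) -> odd_Im (fun y => h.[0 +i* y]) ->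
  \sum_(r <- s) sgz (complex.Re r) * sgz (complex.Im r) = 0.
Proof.
move=> s4 h hR hI oddR oddI; have s_even : ~~ odd (size s) by rewrite -dvdn2 (dvdn_trans _ s4).
set hsq := \prod_(r <- map (fun r => r * r) s) ('X - r%:P).
have hsqE z : hsq.[z * z] = h.[z] * h.[- z].
  rewrite !horner_prod_XsubC big_map prod_subr_sqr -signr_odd.
  by rewrite (negPf s_even) mul1r.
have iyN (y : R) : - (0 +i* y) = 0 +i* (- y) by apply/eqP; rewrite eq_complex /= oppr0 !eqxx.
have hsq_pos : pos_where_real (fun x => hsq.[x%:C]).
  move=> x /=; have [x_ge0|x_lt0] := leP 0 x.
    rewrite -[x](sqr_sqrtr x_ge0) expr2 rmorphM /= hsqE -rmorphN.
    by apply: Re_mul_gt0; [apply: oddR | apply: hR | apply: hR].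
  have -> : x%:C = (0 +i* Num.sqrt (- x)) * (0 +i* Num.sqrt (- x)).
    apply/eqP; rewrite eq_complex /= !(mul0r, mulr0, subr0, add0r, sub0r) -expr2.
    by rewrite sqr_sqrtr ?opprK ?eqxx // oppr_ge0 ltW.
  by rewrite hsqE iyN; apply: Re_mul_gt0; [apply: oddI | apply: hI | apply: hI].
have sq_even : ~~ odd (size (map (fun r => r * r) s)) by rewrite size_map.
have [_] := balanced_half_planes sq_even hsq_pos.
by rewrite big_map; under eq_bigr do rewrite sgz_Im_sqr.
Qed.

Lemma count_first_quadrant s :
  all (fun r => complex.Im r != 0) s -> all (fun r => complex.Re r != 0) s ->
  4 * (count first_quadrant s)%:Z =
  \sum_(r <- s) (1 + sgz (complex.Re r)) * (1 + sgz (complex.Im r)).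
Proof.
elim: s => [|r s IH]; first by rewrite big_nil.
rewrite /= big_cons => /andP[Im_r sI] /andP[Re_r sR]; rewrite PoszD mulrDr IH //; congr (_ + _).
rewrite /first_quadrant; case: (sgzP (complex.Re r)) Re_r => // hr _;
  case: (sgzP (complex.Im r)) Im_r => // hi _ //=;
  by rewrite ?hr ?hi /= ?(ltW hr) ?(ltW hi) ?(lt_gtF hr) ?(lt_gtF hi).
Qed.

(* Expanding (1 + sgz Re r)(1 + sgz Im r), the three balance relations leave only the
   constant term. *)
Theorem first_quadrant_roots s : (4 %| size s)%N ->
  let h := \prod_(r <- s) ('X - r%:P) in
  pos_where_real (fun x => h.[x%:C]) -> pos_where_real (fun y => h.[0 +i* y]) ->
  odd_Im (fun x => h.[x%:C]) -> odd_Im (fun y => h.[0 +i* y]) ->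
  count first_quadrant s = (size s %/ 4)%N.
Proof.
move=> s4 h hR hI oddR oddI.
have s_even : ~~ odd (size s) by rewrite -dvdn2 (dvdn_trans _ s4).
have [allI sumI] := balanced_half_planes s_even hR.
have [allR sumR] := balanced_right_left s4 hI.
have := count_first_quadrant allI allR; under eq_bigr do rewrite mulrDr !mulrDl !mul1r mulr1.
rewrite !big_split /= sumI sumR (balanced_quadrants s4 hR hI oddR oddI).
by rewrite big_const_seq count_predT iter_addr_0 natz !addr0; move: (count _ _) => c; lia.
Qed.

Lemma count_eq1_witness (T : eqType) (P : pred T) (s : seq T) : count P s = 1%N ->
  exists z, [/\ z \in s, P z, count_mem z s = 1%N & forall w, w \in s -> P w -> w = z].
Proof.
move=> cP1; move: (cP1); rewrite -size_filter; case Hf: (filter P s) => [|z [|y t]] //= _.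
have : z \in filter P s by rewrite Hf mem_head.
rewrite mem_filter => /andP[Pz zs]; exists z; split => //.
  apply/eqP; rewrite eqn_leq -{1}cP1 sub_count /=; last by move=> w /eqP->.
  by rewrite lt0n; apply/eqP => /count_memPn; rewrite zs.
move=> w ws Pw; have : w \in filter P s by rewrite mem_filter Pw ws.
by rewrite Hf inE => /eqP.
Qed.

End Quadrants.

Section Quartic.
Variable R : rcfType.
Local Notation C := R[i].
Local Open Scope complex_scope.
Variables (c4 A c2 a1 a2 : R).

Definition quartic (al : C) : {poly C} :=
  'X^4 + (c4%:C)%:P * 'X * ((A%:C)%:P * ('X^2 + 1) + al%:P * ('X^2 - 1)) + (c2%:C)%:P * 'X^2 + 1.

Local Notation q := (quartic (a1 +i* (- a2))).

Lemma monic_size_quartic al : quartic al \is monic /\ size (quartic al) = 5%N.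
Proof.
rewrite monicE.
have -> : quartic al = 'X^4 + ((c4%:C * (A%:C + al))%:P * 'X^3 + (c2%:C)%:P * 'X^2
    + (c4%:C * (A%:C - al))%:P * 'X^1 + 1%:P).
  by rewrite /quartic !polyCM polyCD polyCB polyC1 !expr1 !exprS expr0 mulr1; ring.
have size_CXn (c : C) k : (size (c%:P * 'X^k)%R <= k.+1)%N.
  by rewrite mul_polyC (leq_trans (size_scale_leq _ _)) // size_polyXn.
have small : (size ((c4%:C * (A%:C + al))%:P * 'X^3 + (c2%:C)%:P * 'X^2
    + (c4%:C * (A%:C - al))%:P * 'X^1 + 1%:P)%R < size ('X^4 : {poly C}))%N.
  rewrite size_polyXn ltnS.
  by do ![apply: leq_trans (size_polyD _ _) _; rewrite geq_max; apply/andP; split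
         | apply: leq_trans (size_CXn _ _) _ | apply: leq_trans (size_polyC_leq1 _) _].
by rewrite lead_coefDl // size_polyDl // lead_coefXn size_polyXn.
Qed.

Lemma horner_quartic al z : (quartic al).[z] =
  z ^+ 4 + c4%:C * z * (A%:C * (z ^+ 2 + 1) + al * (z ^+ 2 - 1)) + c2%:C * z ^+ 2 + 1.
Proof. by rewrite /quartic !hornerE. Qed.

Lemma quartic_real_axis (x : R) :
  q.[x%:C] = (x ^+ 4 + c4 * x * (A * (x ^+ 2 + 1) + a1 * (x ^+ 2 - 1)) + c2 * x ^+ 2 + 1)
             +i* (- (c4 * a2 * x * (x ^+ 2 - 1))).
Proof.
apply/eqP; rewrite horner_quartic eq_complex !exprS !expr0 /=.
by apply/andP; split; apply/eqP; ring.
Qed.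

Lemma quartic_imag_axis (y : R) :
  q.[0 +i* y] = (y ^+ 4 - c2 * y ^+ 2 + 1 - c4 * a2 * y * (y ^+ 2 + 1))
                +i* (c4 * y * (A * (1 - y ^+ 2) - a1 * (y ^+ 2 + 1))).
Proof.
apply/eqP; rewrite horner_quartic eq_complex !exprS !expr0 /=.
by apply/andP; split; apply/eqP; ring.
Qed.

Hypotheses (c4_gt0 : 0 < c4) (a2_gt0 : 0 < a2) (A_lt_a1 : A < a1) (A_a1_ge0 : 0 <= A + a1).
Hypotheses (q_pos_at1 : 0 < 2 + c2 + 2 * c4 * A) (q_pos_atN1 : 0 < 2 + c2 - 2 * c4 * A).

(* On the real axis q is real only at 0 and +-1, where it equals 1, 2 + c2 + 2 c4 A
   and 2 + c2 - 2 c4 A. *)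
Lemma quartic_pos_real_axis : pos_where_real (fun x => q.[x%:C]).
Proof.
move=> x; rewrite quartic_real_axis /= => /eqP; rewrite oppr_eq0 -mulrA mulf_eq0.
rewrite (gt_eqF (mulr_gt0 c4_gt0 a2_gt0)) mulf_eq0 /= => /orP[/eqP->|/eqP x2].
  by rewrite !expr0n /= !(mulr0, mul0r, add0r, addr0) ltr01.
have -> : x ^+ 4 + c4 * x * (A * (x ^+ 2 + 1) + a1 * (x ^+ 2 - 1)) + c2 * x ^+ 2 + 1
    = 2 + c2 + 2 * c4 * A * x + (x ^+ 2 - 1) * (x ^+ 2 + 1 + c4 * x * (A + a1) + c2) by ring.
rewrite x2 mul0r addr0.
have /eqP : (x - 1) * (x + 1) = 0 by rewrite -x2; ring.
by rewrite mulf_eq0 subr_eq0 addr_eq0 => /orP[]/eqP->; rewrite ?mulr1 ?mulrN1.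
Qed.

(* On the imaginary axis Im q vanishes only at 0, since A (1 - y^2) - a1 (1 + y^2) < 0. *)
Lemma quartic_pos_imag_axis : pos_where_real (fun y => q.[0 +i* y]).
Proof.
move=> y; rewrite quartic_imag_axis /= => /eqP.
have neg : A * (1 - y ^+ 2) - a1 * (y ^+ 2 + 1) < 0.
  by move: A_lt_a1 (mulr_ge0 A_a1_ge0 (sqr_ge0 y)); lra.
rewrite mulf_eq0 (lt_eqF neg) orbF mulf_eq0 (gt_eqF c4_gt0) /= => /eqP->.
by rewrite expr0n /=; lra.
Qed.

Theorem quartic_first_quadrant_root : exists z : C,
  [/\ 0 < complex.Re z, 0 < complex.Im z, root q z, mup z q = 1%N &
      forall w : C, 0 < complex.Re w -> 0 < complex.Im w -> root q w -> w = z].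
Proof.
have [q_monic size_q] := monic_size_quartic (a1 +i* (- a2)).
have [s qE] := closed_field_poly_normal q; rewrite (monicP q_monic) scale1r in qE.
have s4 : size s = 4%N by have := size_q; rewrite qE size_prod_XsubC => -[].
have oddR : odd_Im (fun x => q.[x%:C]) by move=> x; rewrite !quartic_real_axis /=; ring.
have oddI : odd_Im (fun y => q.[0 +i* y]) by move=> y; rewrite !quartic_imag_axis /=; ring.
have := @first_quadrant_roots _ s; rewrite -qE s4.
move=> /(_ isT quartic_pos_real_axis quartic_pos_imag_axis oddR oddI).
case/count_eq1_witness => z [zs /andP[Re_z Im_z] mu_z z_unique].
exists z; split; rewrite ?qE ?root_prod_XsubC ?mu_prod_XsubC //.
move=> w Re_w Im_w; rewrite root_prod_XsubC => ws.
by apply: z_unique; rewrite // /first_quadrant Re_w.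
Qed.

End Quartic.

Section Interval.
Variable R : rcfType.
Implicit Types (u v x : R) (m k : nat).

Lemma sqrtr_lt_sqr u v : 0 < v -> (Num.sqrt u < v) = (u < v ^+ 2).
Proof. by move=> v_gt0; rewrite -ltr_sqrt ?exprn_gt0 // sqrtr_sqr gtr0_norm. Qed.

Lemma Kmk_ge0 m k : 0 <= Kmk R m k.
Proof. by rewrite /Kmk mulr_ge0 ?invr_ge0 ?ler0n // addr_ge0 ?ler0n // divr_ge0 ?ler0n. Qed.

Section MLarge.
Variables m k : nat.
Hypothesis m_large : (2 * k + 1)%:R + Num.sqrt ((6 * k ^ 2 + 6 * k + 1)%:R) <= (m%:R : R).

Lemma m_large_gt0 : (0 : R) < m%:R.
Proof. by apply: lt_le_trans m_large; rewrite ltr_pwDl ?sqrtr_ge0 // ltr0n addn1. Qed.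

(* K <= 1/2 means m^2 - 2(2k+1)m - 2k(k+1) >= 0, whose larger root is 2k+1 + sqrt(6k^2+6k+1). *)
Lemma Kmk_le_half : Kmk R m k <= 1 / 2.
Proof.
have m_gt0 := m_large_gt0.
have hsq : ((6 * k ^ 2 + 6 * k + 1)%:R : R) <= (m%:R - (2 * k + 1)%:R) ^+ 2.
  have d_ge0 : (0 : R) <= m%:R - (2 * k + 1)%:R.
    by rewrite subr_ge0 (le_trans _ m_large) // lerDl sqrtr_ge0.
  by rewrite -[X in X <= _]sqr_sqrtr ?ler0n // ler_pXn2r ?nnegrE ?sqrtr_ge0 // lerBrDl.
have -> : Kmk R m k = ((2 * k + 1)%:R * m%:R + (k * (k + 1))%:R) / (m%:R * m%:R).
  by rewrite /Kmk; field; rewrite gt_eqF.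
rewrite ler_pdivrMr ?mulr_gt0 //; move: hsq; rewrite !natrD !natrM ?natrX.
have : (0 : R) <= k%:R by rewrite ler0n.
set K := k%:R; set M := m%:R; rewrite expr2 => *; nra.
Qed.

End MLarge.

Lemma natr_l_lS_Kmk m k : (0 : R) < m%:R ->
  ((m + k) * (m + k + 1))%:R = m%:R ^+ 2 * (1 + Kmk R m k) :> R.
Proof. by move=> m_gt0; rewrite /Kmk !natrD !natrM !natrD; field; rewrite gt_eqF. Qed.

Lemma a_bound_lt_sqr m k x : 0 <= x -> a_bound R m k < x ->
  24 * (1 + Kmk R m k) < x ^+ 2 * (5 + 2 * Kmk R m k) ^+ 2.
Proof.
rewrite /a_bound; have := Kmk_ge0 m k; set K := Kmk R m k => K_ge0 x_ge0.
have d_gt0 : 0 < 1 + 2 / 5 * K by lra.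
rewrite ltr_pdivrMr // => lt_x.
have lt_sq : (2 * Num.sqrt 6 / 5 * Num.sqrt (1 + K)) ^+ 2 < (x * (1 + 2 / 5 * K)) ^+ 2.
  have lhs_ge0 : 0 <= 2 * Num.sqrt 6 / 5 * Num.sqrt (1 + K).
    by rewrite !mulr_ge0 ?sqrtr_ge0 ?invr_ge0 ?ler0n.
  by rewrite ltr_pXn2r // ?nnegrE ?lhs_ge0 ?(mulr_ge0 x_ge0 (ltW d_gt0)).
have E1 : (2 * Num.sqrt 6 / 5 * Num.sqrt (1 + K)) ^+ 2 = 24 * (1 + K) / 25.
  by rewrite !exprMn !sqr_sqrtr ?addr_ge0 ?ler0n //; field.
have E2 : (x * (1 + 2 / 5 * K)) ^+ 2 = x ^+ 2 * (5 + 2 * K) ^+ 2 / 25 by field.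
by move: lt_sq; rewrite E1 E2 ltr_pM2r // invr_gt0.
Qed.

(* With g = 2(1+K)/3 and c = sqrt(1 - x^2) we have x^2 = (1 - c)(1 + c), so the claim is
   c (1 + g) < 1 - g, whose square is the hypothesis (using g <= 1). *)
Lemma sqr_ratio_gt K x : 0 <= K -> K <= 1 / 2 -> 0 <= x -> x < 1 ->
  24 * (1 + K) < x ^+ 2 * (5 + 2 * K) ^+ 2 ->
  2 / 3 * (1 + K) * (1 + Num.sqrt (1 - x ^+ 2)) ^+ 2 < x ^+ 2.
Proof.
move=> K_ge0 K_half x_ge0 x_lt1 hx.
have x2_lt1 : x ^+ 2 < 1 by rewrite expr2; nra.
have c_ge0 := sqrtr_ge0 (1 - x ^+ 2).
have c2 : Num.sqrt (1 - x ^+ 2) ^+ 2 = 1 - x ^+ 2 by rewrite sqr_sqrtr // subr_ge0 ltW.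
set c := Num.sqrt _ in c_ge0 c2 *; set g := 2 / 3 * (1 + K).
have g_le1 : g <= 1 by rewrite /g; lra.
have hg : 4 * g < x ^+ 2 * (1 + g) ^+ 2.
  have -> : 4 * g = 24 * (1 + K) / 9 by rewrite /g; field.
  have -> : x ^+ 2 * (1 + g) ^+ 2 = x ^+ 2 * (5 + 2 * K) ^+ 2 / 9 by rewrite /g; field.
  by rewrite ltr_pM2r // invr_gt0 ltr0n.
have hc : c * (1 + g) < 1 - g.
  have : c ^+ 2 * (1 + g) ^+ 2 < (1 - g) ^+ 2 by rewrite c2; move: hg; rewrite !expr2; nra.
  by rewrite !expr2 => h; nra.
have -> : x ^+ 2 = (1 - c) * (1 + c) by rewrite mulrBl mul1r mulrDr mulr1 -expr2 c2; ring.
by rewrite expr2 mulrA ltr_pM2r; [nra | lra].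
Qed.

Lemma I_low_lt_ratio m k x :
  (2 * k + 1)%:R + Num.sqrt ((6 * k ^ 2 + 6 * k + 1)%:R) <= (m%:R : R) ->
  0 <= x -> x < 1 -> a_bound R m k < x ->
  I_low R m k < m%:R * x / (2 * (1 + Num.sqrt (1 - x ^+ 2))).
Proof.
move=> m_large x_ge0 x_lt1 x_gt_bound.
have m_gt0 := m_large_gt0 m_large.
have hx := a_bound_lt_sqr x_ge0 x_gt_bound.
have key := sqr_ratio_gt (Kmk_ge0 m k) (Kmk_le_half m_large) x_ge0 x_lt1 hx.
have x_gt0 : 0 < x.
  rewrite lt0r x_ge0 andbT; apply: contraTneq hx => ->.
  by rewrite expr0n mul0r -leNgt pmulr_rge0 // addr_ge0 ?Kmk_ge0.
have c_ge0 := sqrtr_ge0 (1 - x ^+ 2); set c := Num.sqrt _ in c_ge0 key *.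
have c1_gt0 : 0 < 1 + c by lra.
rewrite /I_low natr_l_lS_Kmk // sqrtr_lt_sqr ?divr_gt0 ?mulr_gt0 //.
set K := Kmk R m k in key *; set M : R := m%:R in m_gt0 *.
have -> : (M * x / (2 * (1 + c))) ^+ 2 = M ^+ 2 * x ^+ 2 / (4 * (1 + c) ^+ 2).
  by field; rewrite gt_eqF.
rewrite ltr_pdivlMr ?mulr_gt0 ?exprn_gt0 //.
have -> : 6^-1 * (M ^+ 2 * (1 + K)) * (4 * (1 + c) ^+ 2)
    = M ^+ 2 * (2 / 3 * (1 + K) * (1 + c) ^+ 2) by field.
by rewrite ltr_pM2l ?exprn_gt0.
Qed.

End Interval.

Section KerrParameters.
Variable R : rcfType.
Implicit Types (M mu a b e : R) (m k l n : nat).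

Lemma I_high_ratio M a m :
  I_high M a m = m%:R * (a / M) / (2 * (1 + Num.sqrt (1 - (a / M) ^+ 2))).
Proof. by rewrite /I_high expr_div_n mulrA. Qed.

Lemma betaR_gt0 M mu m k : 0 < mu * M -> I_low R m k < mu * M -> 0 < betaR M mu (m + k).
Proof.
move=> muM_gt0; rewrite /I_low sqrtr_lt_sqr // /betaR subr_gt0 -exprMn => lt_l.
by rewrite ltr_pdivrMr ?exprn_gt0 //; lra.
Qed.

Lemma betaR_le6 M mu l : 0 < mu * M -> betaR M mu l <= 6.
Proof. by move=> muM_gt0; rewrite /betaR gerBl divr_ge0 // -exprMn sqr_ge0. Qed.

Lemma alpha1_gt M mu a m : 0 < mu -> 0 < M -> mu * M < I_high M a m ->
  2 + epsR M a < alpha1 M mu a m.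
Proof.
move=> mu_gt0 M_gt0; have := sqrtr_ge0 (1 - a ^+ 2 / M ^+ 2).
rewrite /I_high /epsR /alpha1; move: (Num.sqrt _) => c c_ge0.
have c1_gt0 : 0 < 2 * (1 + c) by lra.
rewrite ltr_pdivlMr // => lt_high.
have -> : m%:R * a / (mu * M ^+ 2) = m%:R * a / M / (mu * M) by field; rewrite !gt_eqF.
rewrite ltr_pdivlMr ?mulr_gt0 //.
by rewrite (_ : (2 + 2 * c) * (mu * M) = mu * M * (2 * (1 + c))) //; ring.
Qed.

Lemma alpha2_gt0 M mu a n : 0 < mu -> 0 < M -> 0 <= a -> a < M -> 0 < alpha2 M mu a n.
Proof.
move=> mu_gt0 M_gt0 a_ge0 a_lt_M.
have x_ge0 : 0 <= a / M by rewrite divr_ge0 // ltW.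
have x_lt1 : a / M < 1 by rewrite ltr_pdivrMr // mul1r.
have s_gt0 : 0 < Num.sqrt (1 - a ^+ 2 / M ^+ 2).
  by rewrite sqrtr_gt0 subr_gt0 -expr_div_n exprn_ilt1.
by rewrite /alpha2 mulr_gt0 // divr_gt0 ?mulr_gt0 ?ltr0n ?addn1.
Qed.

Lemma Kerr_coeffs_pos b e : 0 < b -> b <= 6 -> 0 <= e ->
  [/\ 0 < 4 / (b + e),
      0 < 2 + 2 * (16 - b + 3 * e) / (b + e) + 2 * (4 / (b + e)) * (2 + e) &
      0 < 2 + 2 * (16 - b + 3 * e) / (b + e) - 2 * (4 / (b + e)) * (2 + e)].
Proof.
move=> b_gt0 b_le6 e_ge0; have be_gt0 : 0 < b + e by lra.
have -> : 2 + 2 * (16 - b + 3 * e) / (b + e) - 2 * (4 / (b + e)) * (2 + e) = 16 / (b + e).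
  by field; rewrite gt_eqF.
have -> : 2 + 2 * (16 - b + 3 * e) / (b + e) + 2 * (4 / (b + e)) * (2 + e)
    = 16 * (3 + e) / (b + e) by field; rewrite gt_eqF.
by rewrite !divr_gt0 // ?addr_gt0 ?mulr_gt0 //; lra.
Qed.

End KerrParameters.

Theorem mainTheorem11 (R : rcfType) (M a : R) (m k n : nat) :
  0 < M ->
  (2 * k + 1)%:R + Num.sqrt ((6 * k ^ 2 + 6 * k + 1)%:R) <= (m%:R : R) ->
  0 <= a -> a < M ->
  a_bound R m k < a / M -> a / M < 1 ->
  I_low R m k < I_high M a m /\
  (forall mu : R, 0 < mu ->
     I_low R m k < mu * M -> mu * M < I_high M a m ->
     exists z : R[i],
       [/\ 0 < complex.Re z, 0 < complex.Im z, root (qKerr M mu a m k n) z,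
           mup z (qKerr M mu a m k n) = 1%N &
           forall w : R[i], 0 < complex.Re w -> 0 < complex.Im w ->
             root (qKerr M mu a m k n) w -> w = z]).
Proof.
move=> M_gt0 m_large a_ge0 a_lt_M x_gt_bound x_lt1.
split; first by rewrite I_high_ratio I_low_lt_ratio // divr_ge0 // ltW.
move=> mu mu_gt0 mu_gt_low mu_lt_high; have muM_gt0 : 0 < mu * M by rewrite mulr_gt0.
have e_ge0 : 0 <= epsR M a by rewrite mulr_ge0 ?sqrtr_ge0.
have b_gt0 := betaR_gt0 muM_gt0 mu_gt_low.
have [c4_gt0 q1_gt0 qN1_gt0] := Kerr_coeffs_pos b_gt0 (betaR_le6 _ muM_gt0) e_ge0.
have a1_gt := alpha1_gt mu_gt0 M_gt0 mu_lt_high.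
(* qKerr is by definition quartic (4 / (b + e)) (2 + e) (2 (16 - b + 3 e) / (b + e)). *)
by apply: quartic_first_quadrant_root => //; [exact: alpha2_gt0 | lra].
Qed.
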